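(* Every topologically mixing sofic shift space over a finite alphabet has the $\bar d$-shadowing property.
   Context: A sofic shift is the set of label sequences of infinite paths in a finite edge-labelled directed graph; $\mathcal L(X)$ denotes the set of finite words appearing in $X$. $X$ is topologically mixing if for all $u,w\in\mathcal L(X)$ there is $N$ such that for all $n\ge N$ there is $v$ with $|v|=n$ and $uvw\in\mathcal L(X)$. $\bar d(x,y)=\limsup_{n\to\infty}\frac1n|\{0\le j<n:x_j\ne y_j\}|$. $X$ has the $\bar d$-shadowing property if for every $\varepsilon>0$ there is $N\in\mathbb N$ such that for every sequence $(w^{(j)})_{j\ge1}$ of words in $\mathcal L(X)$ with $|w^{(j)}|\ge N$ there is $x'\in X$ with $\bar d(w^{(1)}w^{(2)}\cdots,x')<\varepsilon$. *)

From mathcomp Require Import all_boot all_order all_algebra.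
From mathcomp Require Import all_classical all_reals all_analysis.
Set Implicit Arguments. Unset Strict Implicit. Unset Printing Implicit Defensive.
Import Order.TTheory GRing.Theory Num.Theory.
Local Open Scope classical_set_scope.
Local Open Scope ring_scope.

Record lgraph (A : Type) := LGraph {
  lg_V : finType;
  lg_E : finType;
  lg_src : lg_E -> lg_V;
  lg_tgt : lg_E -> lg_V;
  lg_lab : lg_E -> A }.

Definition is_inf_path A (G : lgraph A) (e : nat -> lg_E G) : Prop :=
  forall n, lg_tgt (e n) = lg_src (e n.+1).

Definition sofic_of A (G : lgraph A) : set (nat -> A) :=
  [set x | exists e : nat -> lg_E G, is_inf_path e /\ forall n, x n = lg_lab (e n)].

Definition is_sofic (A : finType) (X : set (nat -> A)) : Prop :=
  exists G : lgraph A, X = sofic_of G.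

Definition occurs_in (A : eqType) (w : seq A) (x : nat -> A) : Prop :=
  exists i, forall k, (k < size w)%N -> x (i + k)%N = nth (x i) w k.

Definition language (A : eqType) (X : set (nat -> A)) : set (seq A) :=
  [set w | exists2 x, X x & occurs_in w x].

Definition top_mixing (A : eqType) (X : set (nat -> A)) : Prop :=
  forall u w, language X u -> language X w ->
    exists N : nat, forall n, (N <= n)%N ->
      exists v : seq A, size v = n /\ language X (u ++ v ++ w).

Definition dbar (R : realType) (A : eqType) (x y : nat -> A) : R :=
  limn_sup (fun n : nat =>
    (#|[set j : 'I_n | x j != y j]|%:R / n%:R : R)).

Definition word_start (A : Type) (w : nat -> seq A) (j : nat) : nat :=
  (\sum_(i < j) size (w i))%N.

(* z is the infinite concatenation w 0 w 1 w 2 ... (determined uniquely when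
   all words are nonempty) *)
Definition is_concat (A : Type) (w : nat -> seq A) (z : nat -> A) : Prop :=
  forall j k, (k < size (w j))%N -> z (word_start w j + k)%N = nth (z 0%N) (w j) k.

Definition dbar_shadowing (R : realType) (A : finType) (X : set (nat -> A)) : Prop :=
  forall eps : R, 0 < eps ->
    exists N : nat, (0 < N)%N /\
      forall (w : nat -> seq A) (z : nat -> A),
        (forall j, language X (w j)) ->
        (forall j, (N <= size (w j))%N) ->
        is_concat w z ->
        exists2 x', X x' & dbar R z x' < eps.

From mathcomp Require Import all_boot all_order all_algebra.
From mathcomp Require Import all_classical all_reals all_analysis.
From mathcomp Require Import zify.
Set Implicit Arguments. Unset Strict Implicit. Unset Printing Implicit Defensive.
Import Order.TTheory GRing.Theory Num.Theory.

(* Let X be presented by a finite labelled graph G.  Finiteness of G gives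
   two facts: (1) mixing is uniform -- one gap length M joins any two words
   of the language, because whether two words can be joined with a given gap
   depends only on the finitely many pairs (end vertices of the first word,
   start vertices of the second); (2) X is closed -- a sequence all of whose
   prefixes lie in the language is a point of X (Koenig's lemma).
   Given words w_0, w_1, ... of length at least N = (M + 1) k, we drop the
   last M letters of each word and join the trimmed words by connectors of
   length M.  This yields an increasing chain of words of the language whose
   limit x' is a point of X by (2), and x' agrees with the concatenation z
   of the w_j except in the last M positions of each word.  Counting these
   windows gives dbar(z, x') <= 2 / k, which is below eps for k large. *)

(* A property of (element, threshold) pairs that is upward closed in the
   threshold and holds eventually for every element of a finite type holds
   from one common threshold on; this is the only way finiteness of the
   presenting graph enters the proof. *)
Lemma finite_uniform_bound (T : finType) (P : T -> nat -> Prop) :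
  (forall t n m, P t n -> (n <= m)%N -> P t m) ->
  (forall t, exists N, P t N) -> exists N, forall t, P t N.
Proof.
move=> P_mono P_ev.
suff [N HN] : exists N, forall t, t \in enum T -> P t N.
  by exists N => t; apply: HN; rewrite mem_enum.
elim: (enum T) => [|a s [N HN]]; first by exists 0%N.
have [Na HNa] := P_ev a.
exists (maxn N Na) => t; rewrite inE => /orP [/eqP ->|ts].
  by apply: P_mono HNa _; rewrite leq_maxr.
by apply: P_mono (HN t ts) _; rewrite leq_maxl.
Qed.

Section Graph.
Variables (A : finType) (G : lgraph A).
Local Notation V := (lg_V G).
Local Notation E := (lg_E G).
Local Notation src := (@lg_src A G).
Local Notation tgt := (@lg_tgt A G).
Local Notation lab := (@lg_lab A G).
Local Notation X := (sofic_of G).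

Definition reads (e : nat -> E) (u : seq A) : Prop :=
  forall k, (k < size u)%N -> lab (e k) = nth (lab (e k)) u k.

Definition eshift (e : nat -> E) (n : nat) : nat -> E := fun i => e (n + i)%N.
Definition esplice (a : nat -> E) (n : nat) (b : nat -> E) : nat -> E :=
  fun i => if (i < n)%N then a i else b (i - n)%N.

Lemma eshift_path e n : is_inf_path e -> is_inf_path (eshift e n).
Proof. by move=> pe i; rewrite /eshift addnS. Qed.

Lemma esplice_path a n b : is_inf_path a -> is_inf_path b ->
  src (a n) = src (b 0%N) -> is_inf_path (esplice a n b).
Proof.
move=> pa pb ab i; rewrite /esplice.
case: (ltnP i.+1 n) => h1; first by rewrite (ltnW h1); apply: pa.
case: (ltnP i n) => h2; last by rewrite subSn // pb.
have Hn : i.+1 = n by apply/eqP; rewrite eqn_leq h1 h2.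
by rewrite -Hn subnn -ab -Hn; apply: pa.
Qed.

Lemma esplice_reads a b u r :
  reads a u -> reads b r -> reads (esplice a (size u) b) (u ++ r).
Proof.
move=> la lb k; rewrite seq.size_cat => hk; rewrite /esplice seq.nth_cat.
case: ltnP => h; first exact: la.
by apply: lb; lia.
Qed.

Lemma reads_cat e u r : reads e (u ++ r) -> reads e u /\ reads (eshift e (size u)) r.
Proof.
move=> h; split => k hk.
  by have := h k; rewrite seq.size_cat seq.nth_cat hk; apply; lia.
have := h (size u + k)%N; rewrite seq.size_cat seq.nth_cat.
have -> : (size u + k < size u)%N = false by lia.
by rewrite addKn; apply; lia.
Qed.

Lemma reads_take e u n : reads e u -> reads e (take n u).
Proof. by rewrite -{1}(cat_take_drop n u) => /reads_cat []. Qed.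

Lemma languageP u : language X u <-> exists e, is_inf_path e /\ reads e u.
Proof.
split.
  move=> [x [e [pe xe]] [i Hi]]; exists (eshift e i); split; first exact: eshift_path.
  by move=> k hk; rewrite /eshift -xe Hi //; exact: set_nth_default.
move=> [e [pe le]]; exists (fun n => lab (e n)); first by exists e.
by exists 0%N => k hk; rewrite add0n le //; exact: set_nth_default.
Qed.

Lemma language_take u n : language X u -> language X (take n u).
Proof.
by move/languageP => [e [pe le]]; apply/languageP; exists e; split => //; apply: reads_take.
Qed.

Definition end_set (u : seq A) : {set V} :=
  [set s | `[< exists e, is_inf_path e /\ reads e u /\ src (e (size u)) = s >] ].
Definition start_set (w : seq A) : {set V} :=
  [set t | `[< exists e, is_inf_path e /\ reads e w /\ src (e 0%N) = t >] ].

Definition connects (S T : {set V}) (n : nat) : Prop :=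
  exists f, is_inf_path f /\ src (f 0%N) \in S /\ src (f n) \in T.

(* Whether u and w can be joined by a word of length n depends only on the
   pair (end_set u, start_set w), of which there are finitely many. *)
Lemma connects_of_language u v w :
  language X (u ++ v ++ w) -> connects (end_set u) (start_set w) (size v).
Proof.
move/languageP => [e [pe /reads_cat [lu /reads_cat [lv lw]]]].
exists (eshift e (size u)); split; first exact: eshift_path.
split; rewrite inE; apply/asboolP.
  by exists e; split => //; split => //; rewrite /eshift addn0.
exists (eshift (eshift e (size u)) (size v)); split; first by do 2 apply: eshift_path.
by split => //; rewrite /eshift addn0.
Qed.

Lemma language_of_connects u w n : connects (end_set u) (start_set w) n ->
  exists v, size v = n /\ language X (u ++ v ++ w).
Proof.
move=> [f [pf [f_start f_end]]].
move: f_start; rewrite inE => /asboolP [e1 [p1 [l1 s1]]].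
move: f_end; rewrite inE => /asboolP [e3 [p3 [l3 s3]]].
pose v := mkseq (fun i => lab (f i)) n.
have sv : size v = n by rewrite size_mkseq.
exists v; split => //; apply/languageP.
exists (esplice e1 (size u) (esplice f n e3)); split.
  apply: esplice_path => //; first by apply: esplice_path => //; rewrite s3.
  by rewrite s1 /esplice; case: (n) s3.
apply: esplice_reads => //; rewrite -[X in esplice _ X _]sv.
by apply: esplice_reads => // k; rewrite sv => hk; rewrite nth_mkseq.
Qed.

Lemma uniform_mixing : top_mixing X -> exists M, forall u w,
  language X u -> language X w -> exists v, size v = M /\ language X (u ++ v ++ w).
Proof.
move=> mix.
pose realized (q : {set V} * {set V}) :=
  exists u w, language X u /\ language X w /\ end_set u = q.1 /\ start_set w = q.2.
pose P q n := forall m, (n <= m)%N -> realized q -> connects q.1 q.2 m.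
have [M HM] : exists M, forall q, P q M.
  apply: finite_uniform_bound => [q n m Pn nm k mk|[S T]].
    by apply: Pn; exact: leq_trans nm mk.
  case: (EM (realized (S, T))) => [[u [w [Lu [Lw /= [<- <-]]]]]|nq]; last first.
    by exists 0%N => m _ /nq.
  have [N HN] := mix u w Lu Lw; exists N => m Nm _.
  by have [v [<- Lv]] := HN m Nm; exact: connects_of_language.
exists M => u w Lu Lw; apply: language_of_connects.
by apply: (HM (end_set u, start_set w)) => //; exists u, w.
Qed.

Definition follows (x : nat -> A) (n : nat) (v : V) (m : nat) : Prop :=
  exists e, is_inf_path e /\ src (e 0%N) = v /\
    forall k, (k < m)%N -> lab (e k) = x (n + k)%N.

Lemma follows_mono x n v m m' : follows x n v m -> (m' <= m)%N -> follows x n v m'.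
Proof.
move=> [e [pe [se le]]] h; exists e; split => //; split => // k km.
by apply: le; exact: leq_trans km h.
Qed.

(* Koenig's lemma, first step: some vertex lets one read arbitrarily long
   prefixes of x (pigeonhole over the finitely many vertices). *)
Lemma follows_start x : (forall m, language X (mkseq x m)) ->
  exists v, forall m, follows x 0 v m.
Proof.
move=> Lx; apply/not_existsP => none.
have [M HM] : exists M, forall v, ~ follows x 0 v M.
  apply: finite_uniform_bound => [v n m hn nm /follows_mono /(_ nm)//|v].
  by apply/existsNP; exact: none v.
have [e [pe le]] := (languageP _).1 (Lx M).
apply: (HM (src (e 0%N))); exists e; split => //; split => // k hk.
by have := le k; rewrite size_mkseq nth_mkseq // => ->.
Qed.

(* Koenig's lemma, inductive step: such a vertex has an outgoing edge labelled
   x n whose target again lets one read arbitrarily long continuations. *)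
Lemma follows_step x n v : (forall m, follows x n v m) ->
  exists ed, src ed = v /\ lab ed = x n /\ forall m, follows x n.+1 (tgt ed) m.
Proof.
move=> fv; apply/not_existsP => none.
have [M HM] : exists M, forall ed,
    src ed = v -> lab ed = x n -> ~ follows x n.+1 (tgt ed) M.
  apply: finite_uniform_bound => [ed a b h ab sv lv /follows_mono /(_ ab)|ed].
    exact: h sv lv.
  case: (EM (src ed = v /\ lab ed = x n)) => [[sv lv]|ns]; last first.
    by exists 0%N => src_ed lab_ed; case: ns.
  have [m hm] : exists m, ~ follows x n.+1 (tgt ed) m.
    by apply/existsNP => all; apply: (none ed).
  by exists m.
have [e [pe [se le]]] := fv M.+1.
apply: (HM (e 0%N)) => //; first by rewrite le // addn0.
exists (eshift e 1); split; first exact: eshift_path.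
split; first by rewrite /eshift (pe 0%N).
by move=> k hk; rewrite /eshift le; [congr x; lia|lia].
Qed.

(* Sofic shifts are closed: a sequence all of whose prefixes lie in the
   language is a point of X.  Choosing the edges of follows_step from the
   vertex of follows_start on traces a path reading x. *)
Lemma sofic_closed x : (forall m, language X (mkseq x m)) -> X x.
Proof.
move=> Lx; have [v0 fv0] := follows_start Lx.
have [e0 _] := (languageP _).1 (Lx 0%N).
pose good n v ed := (forall m, follows x n v m) ->
  src ed = v /\ lab ed = x n /\ forall m, follows x n.+1 (tgt ed) m.
have [step Hstep] : {step : nat * V -> E & forall p, good p.1 p.2 (step p)}.
  apply: (@choice _ _ (fun p => good p.1 p.2)) => -[n v].
  case: (EM (forall m, follows x n v m)).
    by move=> /follows_step [ed hed]; exists ed.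
  by move=> nf; exists (e0 0%N).
pose vs n := iteri n (fun i v => tgt (step (i, v))) v0.
have fvs n m : follows x n (vs n) m.
  by elim: n m => [|n IH] m //; have [_ [_]] := Hstep (n, vs n) IH.
exists (fun n => step (n, vs n)); split => n.
  by have [-> _] := Hstep (n.+1, vs n.+1) (fvs n.+1).
by have [_ [-> _]] := Hstep (n, vs n) (fvs n).
Qed.

End Graph.

Lemma word_start0 (A : Type) (w : nat -> seq A) : word_start w 0 = 0%N.
Proof. by rewrite /word_start big_ord0. Qed.

Lemma word_startS (A : Type) (w : nat -> seq A) j :
  word_start w j.+1 = (word_start w j + size (w j))%N.
Proof. by rewrite /word_start big_ord_recr. Qed.

Lemma word_start_lb (A : Type) (w : nat -> seq A) N j :
  (forall i, N <= size (w i))%N -> (j * N <= word_start w j)%N.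
Proof.
move=> w_long; elim: j => [|j IH]; first by rewrite word_start0.
by rewrite word_startS mulSn addnC leq_add.
Qed.

Lemma word_start_cover (A : Type) (w : nat -> seq A) p :
  (forall i, 0 < size (w i))%N ->
  exists i, (word_start w i <= p < word_start w i.+1)%N.
Proof.
move=> w_ne.
have ex : exists j, (p < word_start w j)%N.
  by exists p.+1; apply: leq_trans (word_start_lb p.+1 w_ne); rewrite muln1.
case: (ex_minnP ex) => -[|i]; first by rewrite word_start0.
move=> p_lt minj; exists i; rewrite p_lt andbT leqNgt.
by apply/negP => /minj; rewrite ltnn.
Qed.

(* Each word w j loses its last M letters
   (trimmed j); the trimmed words are successively joined by connectors,
   giving an increasing chain of words (glued n) whose limit agrees with
   the concatenation z of the w j except in the last M positions of each
   word. *)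
Section Gluing.
Variables (A : eqType) (L : seq A -> Prop) (M : nat) (g : seq A -> seq A -> seq A).
Hypothesis L_take : forall u n, L u -> L (take n u).
Hypothesis g_connects : forall u v, L u -> L v ->
  size (g u v) = M /\ L (u ++ g u v ++ v).
Variables (w : nat -> seq A) (z : nat -> A).
Hypothesis L_w : forall j, L (w j).
Hypothesis w_long : forall j, (M < size (w j))%N.
Hypothesis z_concat : is_concat w z.

Definition trimmed (j : nat) : seq A := take (size (w j) - M) (w j).

Fixpoint glued (n : nat) : seq A :=
  if n is n'.+1 then glued n' ++ g (glued n') (trimmed n) ++ trimmed n
  else trimmed 0.

Lemma size_trimmed j : size (trimmed j) = (size (w j) - M)%N.
Proof. by rewrite size_takel // leq_subr. Qed.

Lemma L_glued n : L (glued n).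
Proof.
elim: n => [|n IH]; first exact: L_take.
exact: (g_connects IH (L_take _ (L_w n.+1))).2.
Qed.

Lemma size_connector n : size (g (glued n) (trimmed n.+1)) = M.
Proof. exact: (g_connects (L_glued n) (L_take _ (L_w n.+1))).1. Qed.

Lemma size_glued n : (size (glued n) + M = word_start w n.+1)%N.
Proof.
have := w_long n; elim: n => [|n IH] w_n.
  by rewrite /= size_trimmed word_startS word_start0; lia.
rewrite /= !seq.size_cat size_connector size_trimmed word_startS -IH.
  by have := w_long n.+1; lia.
exact: w_long.
Qed.

Lemma glued_prefix j l : (j <= l)%N -> exists r, glued l = glued j ++ r.
Proof.
move=> /subnK <-; elim: (l - j)%N => [|d [r IH]]; first by exists [::]; rewrite cats0.
by rewrite addSn /= IH -!catA; eexists.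
Qed.

Lemma nth_glued d a b p : (p < size (glued a))%N -> (p < size (glued b))%N ->
  nth d (glued a) p = nth d (glued b) p.
Proof.
wlog ab : a b / (a <= b)%N => [hw|].
  by case: (leqP a b) => [|/ltnW] h pa pb; [|symmetry]; apply: hw.
by move=> pa _; have [r ->] := glued_prefix ab; rewrite seq.nth_cat pa.
Qed.

Lemma size_glued_gt n : (n < size (glued n))%N.
Proof.
have := size_glued n; have := word_start_lb n.+1 w_long.
by rewrite mulSn; nia.
Qed.

Definition glued_limit (p : nat) : A := nth (z 0%N) (glued p) p.

Lemma glued_limit_prefix n : mkseq glued_limit n = take n (glued n).
Proof.
apply: (@eq_from_nth _ (z 0%N)).
  by rewrite size_mkseq size_takel // ltnW // size_glued_gt.
move=> i; rewrite size_mkseq => hi; rewrite nth_mkseq // nth_take //.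
apply: nth_glued; first exact: size_glued_gt.
by apply: leq_trans (size_glued_gt n); apply: ltnW.
Qed.

Lemma L_glued_limit n : L (mkseq glued_limit n).
Proof. by rewrite glued_limit_prefix; apply: L_take; apply: L_glued. Qed.

Lemma glued_limit_agrees i q : (q < size (w i) - M)%N ->
  glued_limit (word_start w i + q) = z (word_start w i + q).
Proof.
move=> hq.
have hWi : (word_start w i + q < size (glued i))%N.
  by have := size_glued i; rewrite word_startS; lia.
rewrite /glued_limit (nth_glued _ (size_glued_gt _) hWi).
have -> : nth (z 0%N) (glued i) (word_start w i + q) = nth (z 0%N) (trimmed i) q.
  case: i hq hWi => [|i] hq hWi; first by rewrite word_start0.
  rewrite /= catA seq.nth_cat seq.size_cat size_connector size_glued.
  by rewrite ltnNge leq_addr /= addKn.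
by rewrite nth_take // z_concat //; lia.
Qed.

Lemma glued_limit_errors p : glued_limit p != z p ->
  exists i, (p < word_start w i.+1 <= p + M)%N.
Proof.
move=> err; have [i /andP [lo hi]] : exists i, (word_start w i <= p < word_start w i.+1)%N.
  by apply: word_start_cover => j; apply: leq_ltn_trans (w_long j).
exists i; rewrite hi /=; move: hi; rewrite word_startS => hi.
case: (ltnP (p - word_start w i) (size (w i) - M)) => [/glued_limit_agrees|]; last by lia.
by rewrite subnKC // => agree; rewrite agree eqxx in err.
Qed.

End Gluing.

Lemma sofic_window_shadowing (A : finType) (G : lgraph A) :
  top_mixing (sofic_of G) -> exists M, forall (w : nat -> seq A) (z : nat -> A),
    (forall j, language (sofic_of G) (w j)) -> (forall j, M < size (w j))%N ->
    is_concat w z -> exists2 x', sofic_of G x' &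
      forall p, x' p != z p -> exists i, (p < word_start w i.+1 <= p + M)%N.
Proof.
move=> mix; have [M conn] := uniform_mixing mix.
pose good (p : seq A * seq A) v := language (sofic_of G) p.1 ->
  language (sofic_of G) p.2 -> size v = M /\ language (sofic_of G) (p.1 ++ v ++ p.2).
have [g g_good] : {g : seq A * seq A -> seq A & forall p, good p (g p)}.
  apply: (@choice _ _ good) => -[u v].
  case: (EM (language (sofic_of G) u /\ language (sofic_of G) v)) => [[Lu Lv]|nL].
    by have [c hc] := conn u v Lu Lv; exists c.
  by exists [::] => Lu Lv; case: nL.
have L_take := @language_take A G.
have g_conn u v : language (sofic_of G) u -> language (sofic_of G) v ->
    size (g (u, v)) = M /\ language (sofic_of G) (u ++ g (u, v) ++ v).
  exact: g_good (u, v).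
exists M => w z L_w w_long z_concat.
exists (glued_limit M (fun u v => g (u, v)) w z).
  by apply: sofic_closed => n; exact: (L_glued_limit L_take g_conn z L_w w_long).
by move=> p; exact: (glued_limit_errors L_take g_conn L_w w_long z_concat).
Qed.

Lemma window_card (n s M : nat) :
  (\sum_(j < n) ((j < s) && (s <= j + M) : nat) <= M)%N.
Proof.
rewrite -(big_mkord xpredT (fun j => ((j < s) && (s <= j + M) : nat))).
suff : (\sum_(0 <= j < n) ((j < s) && (s <= j + M) : nat) <= minn M (n - (s - M)))%N.
  by move=> h; apply: leq_trans h (geq_minl _ _).
elim: n => [|n IH]; first by rewrite big_geq.
rewrite big_nat_recr //=.
case h: ((n < s) && (s <= n + M))%N => /=; first by move/andP: h => [h1 h2]; lia.
by rewrite addn0; apply: leq_trans IH _; lia.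
Qed.

Lemma card_window_errors (P : pred nat) (s : nat -> nat) (M N n : nat) :
  (0 < N)%N -> (forall i, i.+1 * N <= s i)%N ->
  (forall p, P p -> exists i, (p < s i <= p + M)%N) ->
  (#|[set j : 'I_n | P j]| <= M * ((n + M) %/ N))%N.
Proof.
move=> N_gt0 s_lb P_win; rewrite -sum1_card big_mkcond /=.
apply: (@leq_trans (\sum_(j < n) \sum_(i < (n + M) %/ N)
    ((j < s i) && (s i <= j + M) : nat))%N).
  apply: leq_sum => j _; rewrite inE; case: ifP => // /P_win [i /andP [h1 h2]].
  have iK : (i < (n + M) %/ N)%N.
    by rewrite leq_divRL //; have := s_lb i; have := ltn_ord j; lia.
  by rewrite (bigD1 (Ordinal iK)) //= h1 h2.
rewrite exchange_big /=; apply: (@leq_trans (\sum_(i < (n + M) %/ N) M)%N).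
  by apply: leq_sum => i _; exact: window_card.
by rewrite sum_nat_const card_ord mulnC.
Qed.

Local Open Scope ring_scope.

Lemma error_ratio_le (R : realType) (c n M k : nat) :
  (0 < k)%N -> (M < n)%N -> (c <= M * ((n + M) %/ (M.+1 * k)))%N ->
  c%:R / n%:R <= 2 / k%:R :> R.
Proof.
move=> k_gt0 Mn c_le.
rewrite ler_pdivrMr ?ltr0n; last lia.
rewrite mulrAC ler_pdivlMr ?ltr0n // -!natrM ler_nat.
have div_le := leq_divM (n + M) (M.+1 * k).
have : (M * ((n + M) %/ (M.+1 * k)) * k <= (n + M) %/ (M.+1 * k) * (M.+1 * k))%N.
  by rewrite mulnAC mulnC leq_mul // leq_mul.
by have := leq_mul c_le (leqnn k); lia.
Qed.

Lemma limn_sup_le_eventually (R : realType) (a : R^nat) (c : R) (m : nat) :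
  bounded_fun a -> (forall n, (m <= n)%N -> a n <= c) -> limn_sup a <= c.
Proof.
move=> a_bd a_le; rewrite limn_supE //.
have sups_m : range (sups a) (sups a m) by exists m.
apply: le_trans (ge_inf (bounded_fun_has_lbound_sups a_bd) sups_m) _.
apply: ge_sup; first by exists (a m); exists m => /=.
by move=> _ [n mn <-]; exact: a_le.
Qed.

(* dbar is stated with classical sets; their cardinals are those of finsets. *)
Lemma card_classic (T : finType) (P : T -> bool) :
  #|[set j : T | P j]%classic| = #|[set j : T | P j]|.
Proof. by apply: eq_card => j; rewrite !inE /=; apply/idP/idP; rewrite in_setE. Qed.

Lemma dbar_window_errors (R : realType) (A : eqType) (x y : nat -> A)
    (s : nat -> nat) (M k : nat) :
  (0 < k)%N -> (forall i, i.+1 * (M.+1 * k) <= s i)%N ->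
  (forall p, x p != y p -> exists i, (p < s i <= p + M)%N) ->
  dbar R x y <= 2 / k%:R.
Proof.
move=> k_gt0 s_lb errs.
pose a n := (#|[set j : 'I_n | x j != y j]|%:R / n%:R : R).
have -> : dbar R x y = limn_sup a.
  by congr limn_sup; apply/funext => n; rewrite card_classic.
apply: (@limn_sup_le_eventually _ _ _ M.+1).
  exists 1; split; first exact: num_real.
  move=> b b_gt1 n _; apply: le_trans (ltW b_gt1).
  rewrite ger0_norm ?divr_ge0 //; case: n => [|n]; first by rewrite /a invr0 mulr0.
  by rewrite ler_pdivrMr ?ltr0n // mul1r ler_nat -[X in (_ <= X)%N]card_ord max_card.
move=> n Mn; apply: (@error_ratio_le R _ n M k) => //.
apply: (@card_window_errors (fun j => x j != y j) s) => //.
by rewrite muln_gt0 k_gt0.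
Qed.

Lemma small_ratio (R : realType) (eps : R) :
  0 < eps -> exists2 k : nat, (0 < k)%N & 2 / k%:R < eps.
Proof.
move=> eps_gt0; have [k hk] : exists k : nat, 2 / eps < k%:R.
  by eexists; exact: truncnS_gt.
have k_pos : (0 : R) < k%:R by apply: lt_trans hk; rewrite divr_gt0.
by exists k; rewrite -?(ltr0n R) // ltr_pdivrMr // mulrC -ltr_pdivrMr.
Qed.

Theorem mainTheorem4 (R : realType) (A : finType) (X : set (nat -> A)) :
  is_sofic X -> top_mixing X -> dbar_shadowing R X.
Proof.
move=> [G ->] mix eps eps_gt0.
have [M shadow] := sofic_window_shadowing mix.
have [k k_gt0 k_large] := small_ratio eps_gt0.
exists (M.+1 * k)%N; split; first by rewrite muln_gt0.
move=> w z L_w w_long z_concat.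
have w_longM j : (M < size (w j))%N.
  by apply: leq_trans (w_long j); rewrite leq_pmulr.
have [x' Xx' errs] := shadow w z L_w w_longM z_concat.
exists x' => //; apply: le_lt_trans k_large.
apply: (@dbar_window_errors _ _ _ _ (fun i => word_start w i.+1) M) => //.
- by move=> i; exact: word_start_lb.
- by move=> p; rewrite eq_sym => /errs.
Qed.
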